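(* In the setting of problem (CP1) and the prox-ADC method described in the context, suppose Assumptions 1–6 hold, the generated sequence $\{x^k\}$ is bounded, and $\partial^\infty_Af_p(x)=\{0\}$ for every $x\in\bigcap_{p=1}^m\operatorname{dom}F_p$ and every $p\in I_2$. Then for any $\bar\eta>0$, $\bar\beta>0$, $\bar k\in\mathbb{N}$ there is an integer $k_0\ge\bar k$ with $\max_{1\le p\le m}\sum_{k'\ge k_0}\widehat\alpha_p^{k'}+\epsilon_{k_0}\le\bar\beta$, $\delta_{k_0}/(\lambda+\ell_{k_0})\le\bar\beta$ and $\delta_{k_0}\le\bar\eta$; consequently $x^{k_0,i_{k_0}+1}$ is a $(\bar\eta\max\{1,\sqrt{2m}D\},\bar\beta,\bar k)$-weakly A-stationary point of (CP1), where $D=\sup_{k\in\mathbb{N}}\sup_{y\in Y^k(x^{k+1})}\|y\|$.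
   Context: Problem (CP1): integers $0\le m_1\le m$; $f_p:\mathbb{R}^n\to\mathbb{R}$; $\varphi_p:\mathbb{R}\to\mathbb{R}$ convex for $p\le m_1$; $\varphi_p=\delta_{(-\infty,0]}$ for $p>m_1$; $F_p=\varphi_p\circ f_p$. $I_1=\{p:\varphi_p$ nondecreasing$\}$, $I_2$ its complement. Monotonic decomposition $\varphi_p=\varphi_p^\uparrow+\varphi^\downarrow_p$: $(\varphi_p,0)$ if nondecreasing; $(0,\varphi_p)$ if nonincreasing; otherwise with minimizer $z^*$, $\varphi^\uparrow_p=\varphi_p(z^* )$ on $z\le z^*$, $\varphi_p$ on $z>z^*$; $\varphi_p^\downarrow=\varphi_p-\varphi_p(z^* )$ on $z\le z^*$, $0$ on $z>z^*$. Assumption 1: $f^k_p=g^k_p-h^k_p$ ($g^k_p,h^k_p:\mathbb{R}^n\to\mathbb{R}$ convex), $f_p^k$ epi-converges to $f_p$; $-\infty<\liminf_{x'\to x,k\to\infty}f_p^k(x')\le\limsup_{x'\to x,k\to\infty}f_p^k(x')<\infty$ $\forall x$; $\varphi_p\circ f_p^k$ epi-converges to $\varphi_p\circ f_p$. Assumption 2: $X^k=\{x:f^k_p(x)\le0,p>m_1\}$, $\alpha_p^k=\sup_{X^k}[f^{k+1}_p-f^k_p]_+$; there are $x^0$ and nonnegative $\widehat\alpha_p^k\ge\alpha_p^k$ ($p>m_1$), $\sum_{k'}\widehat\alpha_p^{k'}<\infty$, $f^0_p(x^0)\le-\sum_{k'}\widehat\alpha_p^{k'}$; $\widehat\alpha_p^k=0$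 for $p\le m_1$. Assumption 3: $\exists\ell_k>0$ with $\min\{\mathbb H(\partial g_p^k(x),\partial g_p^k(x')),\mathbb H(\partial h_p^k(x),\partial h_p^k(x'))\}\le\ell_k\|x-x'\|$ $\forall x,x',p$. Assumption 4: each $\sum_{p\le m_1}\varphi_p(f^k_p)+\sum_{p>m_1}\delta_{(-\infty,0]}(f_p^k)$ is level-bounded. Assumption 5: for every $\bar x\in\bigcap_p\operatorname{dom}F_p$, if $0=\sum_py_pv_p$ with $(y_p,v_p)\in(\bigcup\{\mathcal N_{\operatorname{dom}\varphi_p}(t):t\in T_p(\bar x)\}\times\operatorname{con}\partial_Af_p(\bar x))\cup(\mathbb{R}\times[\partial_A^\infty f_p(\bar x)\setminus\{0\}])$ for each $p$, then all $y_p=0$; $T_p(x)=\{t:\exists$ infinite $N$, $x^k\to x$, $f_p^k(x^k)\to_Nt\}$; $\partial_Af_p(\bar x)=\bigcup_{x^k\to\bar x}\operatorname{Lim\,sup}_k[\partial g^k_p(x^k)-\partial h^k_p(x^k)]$, $\partial^\infty_Af_p(\bar x)=\bigcup_{x^k\to\bar x}\operatorname{Lim\,sup}_k^\infty[\partial g^k_p(x^k)-\partial h^k_p(x^k)]$ (outer limit $\{u:\exists$ infinite $N$, $u^k\in C^k$, $u^k\to_Nu\}$, horizon outer limit $\{0\}\cup\{u:\exists$ infinite $N,\lambda_k\downarrow0,u^k\in C^k,\lambda_ku^k\to_Nu\}$). Method: $\lambda>0$; positive $\epsilon_k\downarrow0,\delta_k\downarrow0$ with $\delta_k/(\lambda+\ell_k)\downarrow0$;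 $\sigma^k_p=\sum_{k'\ge k}\widehat\alpha^{k'}_p$; at $y$ pick $a_p\in\partial h^k_p(y)$, $b_p\in\partial g^k_p(y)$; $f^{k,\mathrm{up}}_p(x;y)=g^k_p(x)-h^k_p(y)-a_p^\top(x-y)+\sigma^k_p$, $f^{k,\mathrm{lo}}_p(x;y)=g^k_p(y)+b_p^\top(x-y)-h^k_p(x)$, $\widehat F^k_p(x;y)=\varphi^\uparrow_p(f^{k,\mathrm{up}}_p(x;y))+\varphi^\downarrow_p(f^{k,\mathrm{lo}}_p(x;y))$. Subproblem at $y$: $\operatorname{argmin}\{\sum_{p\le m_1}\widehat F_p^k(x;y)+\frac\lambda2\|x-y\|^2:f^{k,\mathrm{up}}_p(x;y)\le0,p>m_1\}$. $x^{k,0}=x^k$, $x^{k,i+1}$ = subproblem solution at $x^{k,i}$; $i_k$ = first $i$ with $f_p^{k,\mathrm{up}}(x^{k,i+1};x^{k,i})\le f_p^k(x^{k,i+1})+\sigma^k_p+\epsilon_k$ $\forall p$, $f_p^{k,\mathrm{lo}}(x^{k,i+1};x^{k,i})\ge f^k_p(x^{k,i+1})-\epsilon_k$ for $p\in I_2$, $\|x^{k,i+1}-x^{k,i}\|\le\delta_k/(\lambda+\ell_k)$; $x^{k+1}=x^{k,i_k}$. Assumption 6: for all $k$ and every $(x',x'')$ with $x''$ the subproblem solution at $y=x'$, if $y_p\in\mathcal N_{(-\infty,0]}(f^{k,\mathrm{up}}_p(x'';x'))$ ($p>m_1$) and $0\in\sum_{p>m_1}y_p\partial f^{k,\mathrm{up}}_p(x'';x')$,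 then all $y_p=0$. $Y^k(x^{k+1})$: the set of $(y_{1,1},y_{1,2},\dots,y_{m,1},y_{m,2})$ with $0\in\sum_p[y_{p,1}\partial f^{k,\mathrm{up}}_p(x^{k,i_k+1};x^{k,i_k})+y_{p,2}\partial f^{k,\mathrm{lo}}_p(x^{k,i_k+1};x^{k,i_k})]+\lambda(x^{k,i_k+1}-x^{k,i_k})$, $y_{p,1}\in\partial\varphi^\uparrow_p(f^{k,\mathrm{up}}_p(x^{k,i_k+1};x^{k,i_k}))$, $y_{p,2}\in\partial\varphi^\downarrow_p(f^{k,\mathrm{lo}}_p(x^{k,i_k+1};x^{k,i_k}))$. For convex $\psi$, $\partial^\beta\psi(x)=\bigcup\{\partial\psi(z):\|z-x\|\le\beta\}$. $x$ is $(\bar\eta,\bar\beta,\bar k)$-weakly A-stationary if $\exists k\ge\bar k$ with $\operatorname{dist}\big(0,\sum_p\bigcup\{y_{p,1}[\partial^{\bar\beta}g^k_p(x)-\partial^{\bar\beta}h^k_p(x)]+y_{p,2}[\partial^{\bar\beta}g^k_p(x)-\partial^{\bar\beta}h^k_p(x)]:y_{p,1}\in\partial^{\bar\beta}\varphi_p^\uparrow(f^k_p(x)),y_{p,2}\in\partial^{\bar\beta}\varphi_p^\downarrow(f^k_p(x))\}\big)\le\bar\eta$. *)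

(* R : realType, vectors of R^n are
   row vectors 'rV[R]_n, the index set {1,..,m} is 'I_m (0-based, so the
   paper's "p <= m1" is "(p < m1)%N" and "p > m1" is "(m1 <= p)%N"). *)
From HB Require Import structures.
From mathcomp Require Import all_boot all_order all_algebra.
From mathcomp Require Import all_classical all_reals all_analysis.
Set Implicit Arguments. Unset Strict Implicit. Unset Printing Implicit Defensive.
Import Order.TTheory GRing.Theory Num.Theory numFieldNormedType.Exports.
Local Open Scope classical_set_scope.
Local Open Scope ring_scope.

Section Generic.
Context {R : realType} {n : nat}.
Local Notation vec := 'rV[R]_n.

Definition dotv (u v : vec) : R := \sum_(i < n) u 0 i * v 0 i.
Definition enorm (u : vec) : R := Num.sqrt (\sum_(i < n) u 0 i ^+ 2).

Definition vcvg (xs : nat -> vec) (x : vec) : Prop :=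
  forall e : R, 0 < e -> exists K : nat, forall k, (K <= k)%N -> enorm (xs k - x) < e.
Definition vcvg_along (N : set nat) (xs : nat -> vec) (x : vec) : Prop :=
  forall e : R, 0 < e -> exists K : nat, forall k, N k -> (K <= k)%N -> enorm (xs k - x) < e.
Definition rcvg (u : nat -> R) (t : R) : Prop :=
  forall e : R, 0 < e -> exists K : nat, forall k, (K <= k)%N -> `|u k - t| < e.
Definition rcvg_along (N : set nat) (u : nat -> R) (t : R) : Prop :=
  forall e : R, 0 < e -> exists K : nat, forall k, N k -> (K <= k)%N -> `|u k - t| < e.

Definition convex_fn (g : vec -> R) : Prop :=
  forall (x y : vec) (t : R), 0 <= t <= 1 ->
    g (t *: x + (1 - t) *: y) <= t * g x + (1 - t) * g y.
Definition convex_rfn (psi : R -> R) : Prop :=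
  forall (x y t : R), 0 <= t <= 1 ->
    psi (t * x + (1 - t) * y) <= t * psi x + (1 - t) * psi y.

Definition subdiff (g : vec -> R) (x : vec) : set vec :=
  [set v | forall z, g x + dotv v (z - x) <= g z].
Definition esubdiff (psi : R -> \bar R) (t : R) : set R :=
  [set y | psi t \is a fin_num /\ forall s, (psi t + (y * (s - t))%:E <= psi s)%E].
Definition subdiff_enl (b : R) (g : vec -> R) (x : vec) : set vec :=
  [set v | exists z, enorm (z - x) <= b /\ subdiff g z v].
Definition esubdiff_enl (b : R) (psi : R -> \bar R) (t : R) : set R :=
  [set y | exists s, `|s - t| <= b /\ esubdiff psi s y].

Definition setMinus (A B : set vec) : set vec := [set a - b | a in A & b in B].

Definition edist (x : vec) (A : set vec) : \bar R :=
  ereal_inf [set (enorm (x - a))%:E | a in A].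
Definition hausdorff (A B : set vec) : \bar R :=
  maxe (ereal_sup [set edist a B | a in A]) (ereal_sup [set edist b A | b in B]).

Definition ncone (C : set R) (t : R) : set R :=
  [set y | C t /\ forall s, C s -> y * (s - t) <= 0].

Definition conv_hull (A : set vec) : set vec :=
  [set v | exists (r : nat) (w : 'I_r -> R) (a : 'I_r -> vec),
     (forall i, 0 <= w i) /\ \sum_(i < r) w i = 1 /\ (forall i, A (a i)) /\
     v = \sum_(i < r) w i *: a i].

Definition outer_lim (C : nat -> set vec) : set vec :=
  [set u | exists N : set nat, infinite_set N /\
     exists us : nat -> vec, (forall k, N k -> C k (us k)) /\ vcvg_along N us u].
Definition horizon_outer_lim (C : nat -> set vec) : set vec :=
  [set u | u = 0 \/
     exists N : set nat, infinite_set N /\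
     exists (lam : nat -> R) (us : nat -> vec),
       (forall k, 0 < lam k) /\ (forall k, lam k.+1 <= lam k) /\ rcvg lam 0 /\
       (forall k, N k -> C k (us k)) /\ vcvg_along N (fun k => lam k *: us k) u].

(* epi-convergence (Rockafellar-Wets, Prop. 7.2) *)
Definition epi_conv (Fk : nat -> vec -> \bar R) (F : vec -> \bar R) : Prop :=
  forall x,
    (forall xs, vcvg xs x -> (F x <= limn_einf (fun k => Fk k (xs k)))%E) /\
    (exists xs, vcvg xs x /\ (limn_esup (fun k => Fk k (xs k)) <= F x)%E).

Definition joint_liminf (Fk : nat -> vec -> R) (x : vec) : \bar R :=
  ereal_sup [set l | exists (e : R) (K : nat), 0 < e /\
    l = ereal_inf [set r | exists k x', (K <= k)%N /\ enorm (x' - x) < e /\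
                                        r = (Fk k x')%:E]].
Definition joint_limsup (Fk : nat -> vec -> R) (x : vec) : \bar R :=
  ereal_inf [set l | exists (e : R) (K : nat), 0 < e /\
    l = ereal_sup [set r | exists k x', (K <= k)%N /\ enorm (x' - x) < e /\
                                        r = (Fk k x')%:E]].

Definition nondecr (psi : R -> \bar R) : Prop := forall s t, s <= t -> (psi s <= psi t)%E.
Definition nonincr (psi : R -> \bar R) : Prop := forall s t, s <= t -> (psi t <= psi s)%E.

Definition mono_decomp (psi up down : R -> \bar R) : Prop :=
  (nondecr psi -> up = psi /\ down = (fun _ => 0%E)) /\
  (~ nondecr psi -> nonincr psi -> up = (fun _ => 0%E) /\ down = psi) /\
  (~ nondecr psi -> ~ nonincr psi ->
     exists zs : R, (forall z, (psi zs <= psi z)%E) /\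
       forall z, (z <= zs -> up z = psi zs /\ down z = (psi z - psi zs)%E) /\
                 (zs < z -> up z = psi z /\ down z = 0%E)).

Definition ind_nonpos (t : R) : \bar R := if t <= 0 then 0%E else +oo%E.

End Generic.

Record cp1 (R : realType) (n m : nat) := CP1 {
  m1 : nat;
  phi : 'I_m -> R -> \bar R;
  phiU : 'I_m -> R -> \bar R;
  phiD : 'I_m -> R -> \bar R;
  fp : 'I_m -> 'rV[R]_n -> R;
  gk : nat -> 'I_m -> 'rV[R]_n -> R;
  hk : nat -> 'I_m -> 'rV[R]_n -> R
}.

Record padc (R : realType) (n m : nat) := PADC {
  lam : R;
  eps : nat -> R;
  del : nat -> R;
  ell : nat -> R;
  ahat : nat -> 'I_m -> R;
  x0 : 'rV[R]_n;
  asel : nat -> 'I_m -> 'rV[R]_n -> 'rV[R]_n; (* a_p chosen at y, in dh_p^k(y) *)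
  bsel : nat -> 'I_m -> 'rV[R]_n -> 'rV[R]_n; (* b_p chosen at y, in dg_p^k(y) *)
  xs : nat -> 'rV[R]_n;
  xx : nat -> nat -> 'rV[R]_n;
  ik : nat -> nat
}.

Section Problem.
Context {R : realType} {n m : nat} (P : cp1 R n m) (M : padc R n m).
Local Notation vec := 'rV[R]_n.

Definition fk (k : nat) (p : 'I_m) (x : vec) : R := gk P k p x - hk P k p x.
Definition Fp (p : 'I_m) (x : vec) : \bar R := phi P p (fp P p x).
Definition domF_all (x : vec) : Prop := forall p, (Fp p x < +oo)%E.
Definition I2 (p : 'I_m) : Prop := ~ nondecr (phi P p).
Definition domphi (p : 'I_m) : set R := [set t | (phi P p t < +oo)%E].

Definition Tset (p : 'I_m) (x : vec) : set R :=
  [set t | exists N : set nat, infinite_set N /\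
     exists xs' : nat -> vec, vcvg xs' x /\ rcvg_along N (fun k => fk k p (xs' k)) t].
Definition dA (p : 'I_m) (x : vec) : set vec :=
  [set u | exists xs' : nat -> vec, vcvg xs' x /\
     outer_lim (fun k => setMinus (subdiff (gk P k p) (xs' k)) (subdiff (hk P k p) (xs' k))) u].
Definition dAinf (p : 'I_m) (x : vec) : set vec :=
  [set u | exists xs' : nat -> vec, vcvg xs' x /\
     horizon_outer_lim
       (fun k => setMinus (subdiff (gk P k p) (xs' k)) (subdiff (hk P k p) (xs' k))) u].

Definition cp1_wf : Prop :=
  (m1 P <= m)%N /\
  (forall p : 'I_m, (p < m1 P)%N ->
     exists psi : R -> R, convex_rfn psi /\ phi P p = (fun z => (psi z)%:E)) /\
  (forall p : 'I_m, (m1 P <= p)%N -> phi P p = ind_nonpos) /\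
  (forall p, mono_decomp (phi P p) (phiU P p) (phiD P p)) /\
  (forall k p, convex_fn (gk P k p) /\ convex_fn (hk P k p)).

Definition Assumption1 : Prop :=
  (forall p, epi_conv (fun k x => (fk k p x)%:E) (fun x => (fp P p x)%:E)) /\
  (forall p x, (-oo < joint_liminf (fun k => fk k p) x)%E /\
               (joint_liminf (fun k => fk k p) x <= joint_limsup (fun k => fk k p) x)%E /\
               (joint_limsup (fun k => fk k p) x < +oo)%E) /\
  (forall p, epi_conv (fun k x => phi P p (fk k p x)) (fun x => phi P p (fp P p x))).

Definition sigma (k : nat) (p : 'I_m) : R :=
  limn (fun N => \sum_(k <= j < N) ahat M j p).

Definition Xk (k : nat) : set vec := [set x | forall p : 'I_m, (m1 P <= p)%N -> fk k p x <= 0].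
Definition alphak (k : nat) (p : 'I_m) : \bar R :=
  ereal_sup [set (Num.max (fk k.+1 p x - fk k p x) 0)%:E | x in Xk k].

Definition Assumption2 : Prop :=
  (forall k p, 0 <= ahat M k p) /\
  (forall k (p : 'I_m), (m1 P <= p)%N -> (alphak k p <= (ahat M k p)%:E)%E) /\
  (forall p, cvgn (series (fun k => ahat M k p))) /\
  (forall p : 'I_m, (m1 P <= p)%N -> fk 0 p (x0 M) <= - sigma 0 p) /\
  (forall k (p : 'I_m), (p < m1 P)%N -> ahat M k p = 0).

Definition Assumption3 : Prop :=
  (forall k, 0 < ell M k) /\
  (forall k p (x x' : vec),
     (mine (hausdorff (subdiff (gk P k p) x) (subdiff (gk P k p) x'))
           (hausdorff (subdiff (hk P k p) x) (subdiff (hk P k p) x'))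
       <= (ell M k * enorm (x - x'))%:E)%E).

Definition Assumption4 : Prop :=
  forall k (c : R), exists B : R, forall x : vec,
    ((\sum_(p < m | (p < m1 P)%N) phi P p (fk k p x)) +
     (\sum_(p < m | (m1 P <= p)%N) ind_nonpos (fk k p x)) <= c%:E)%E ->
    enorm x <= B.

Definition Assumption5 : Prop :=
  forall xbar : vec, domF_all xbar ->
  forall (y : 'I_m -> R) (v : 'I_m -> vec),
    (forall p,
       ((exists t, Tset p xbar t /\ ncone (domphi p) t (y p)) /\ conv_hull (dA p xbar) (v p))
       \/ (dAinf p xbar (v p) /\ v p <> 0)) ->
    \sum_(p < m) y p *: v p = 0 ->
    forall p, y p = 0.

Definition fup (k : nat) (p : 'I_m) (x y : vec) : R :=
  gk P k p x - hk P k p y - dotv (asel M k p y) (x - y) + sigma k p.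
Definition flo (k : nat) (p : 'I_m) (x y : vec) : R :=
  gk P k p y + dotv (bsel M k p y) (x - y) - hk P k p x.
Definition Fhat (k : nat) (p : 'I_m) (x y : vec) : \bar R :=
  (phiU P p (fup k p x y) + phiD P p (flo k p x y))%E.
Definition subobj (k : nat) (x y : vec) : \bar R :=
  ((\sum_(p < m | (p < m1 P)%N) Fhat k p x y) + ((lam M / 2) * enorm (x - y) ^+ 2)%:E)%E.
Definition sub_feas (k : nat) (x y : vec) : Prop :=
  forall p : 'I_m, (m1 P <= p)%N -> fup k p x y <= 0.
Definition subsol (k : nat) (y x : vec) : Prop :=
  sub_feas k x y /\ forall z, sub_feas k z y -> (subobj k x y <= subobj k z y)%E.

Definition dup (k : nat) (p : 'I_m) (x y : vec) : set vec :=
  [set v - asel M k p y | v in subdiff (gk P k p) x].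
Definition dlo (k : nat) (p : 'I_m) (x y : vec) : set vec :=
  [set bsel M k p y - w | w in subdiff (hk P k p) x].

Definition Assumption6 : Prop :=
  forall k (x' x'' : vec), subsol k x' x'' ->
  forall y : 'I_m -> R,
    (forall p : 'I_m, (m1 P <= p)%N -> ncone [set t | t <= 0] (fup k p x'' x') (y p)) ->
    (exists v : 'I_m -> vec, (forall p : 'I_m, (m1 P <= p)%N -> dup k p x'' x' (v p)) /\
        \sum_(p < m | (m1 P <= p)%N) y p *: v p = 0) ->
    forall p : 'I_m, (m1 P <= p)%N -> y p = 0.

Definition method_wf : Prop :=
  0 < lam M /\
  (forall k, 0 < eps M k) /\ (forall k, eps M k.+1 <= eps M k) /\ rcvg (eps M) 0 /\
  (forall k, 0 < del M k) /\ (forall k, del M k.+1 <= del M k) /\ rcvg (del M) 0 /\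
  (forall k, del M k.+1 / (lam M + ell M k.+1) <= del M k / (lam M + ell M k)) /\
  rcvg (fun k => del M k / (lam M + ell M k)) 0 /\
  (forall k p y, subdiff (hk P k p) y (asel M k p y)) /\
  (forall k p y, subdiff (gk P k p) y (bsel M k p y)).

Definition stop_test (k i : nat) : Prop :=
  let xn := xx M k i.+1 in let xc := xx M k i in
  (forall p, fup k p xn xc <= fk k p xn + sigma k p + eps M k) /\
  (forall p, I2 p -> fk k p xn - eps M k <= flo k p xn xc) /\
  enorm (xn - xc) <= del M k / (lam M + ell M k).

Definition generated : Prop :=
  xs M 0 = x0 M /\
  (forall k, xx M k 0 = xs M k) /\
  (forall k i, subsol k (xx M k i) (xx M k i.+1)) /\
  (forall k, stop_test k (ik M k) /\ forall i, (i < ik M k)%N -> ~ stop_test k i) /\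
  (forall k, xs M k.+1 = xx M k (ik M k)).

Definition Yset (k : nat) : set (('I_m -> R) * ('I_m -> R)) :=
  [set y | let xn := xx M k (ik M k).+1 in let xc := xx M k (ik M k) in
     (exists v1 v2 : 'I_m -> vec,
        (forall p, dup k p xn xc (v1 p)) /\ (forall p, dlo k p xn xc (v2 p)) /\
        \sum_(p < m) (y.1 p *: v1 p + y.2 p *: v2 p) + lam M *: (xn - xc) = 0) /\
     (forall p, esubdiff (phiU P p) (fup k p xn xc) (y.1 p) /\
                esubdiff (phiD P p) (flo k p xn xc) (y.2 p))].
Definition ynorm (y : ('I_m -> R) * ('I_m -> R)) : R :=
  Num.sqrt (\sum_(p < m) (y.1 p ^+ 2 + y.2 p ^+ 2)).
Definition Dconst : \bar R :=
  ereal_sup [set (ynorm y)%:E | y in [set y | exists k, Yset k y]].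

Definition wA_set (beta : R) (k : nat) (p : 'I_m) (x : vec) : set vec :=
  let A := setMinus (subdiff_enl beta (gk P k p) x) (subdiff_enl beta (hk P k p) x) in
  [set v | exists (y1 y2 : R) (a1 a2 : vec),
     esubdiff_enl beta (phiU P p) (fk k p x) y1 /\
     esubdiff_enl beta (phiD P p) (fk k p x) y2 /\
     A a1 /\ A a2 /\ v = y1 *: a1 + y2 *: a2].
Definition msum (S : 'I_m -> set vec) : set vec :=
  [set v | exists w : 'I_m -> vec, (forall p, S p (w p)) /\ v = \sum_(p < m) w p].
Definition weakly_A_stationary (eta : \bar R) (beta : R) (kbar : nat) (x : vec) : Prop :=
  exists k, (kbar <= k)%N /\
    (edist 0 (msum (fun p => wA_set beta k p x)) <= eta)%E.

End Problem.

(* The core is the existence of KKT multipliers for the convex subproblem solved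
   at each inner step. They are read off a subgradient, at the origin, of the optimal
   value of the subproblem as a function of perturbations of the arguments of g_p and
   h_p, of the levels of the models and of the level of the objective. This value
   function is convex and finite, so it has a subgradient, built one coordinate at a
   time as a supremum of difference quotients. Assumption 6 rules out a vanishing
   objective multiplier, and dividing by it gives the multipliers of Y^k(x^{k+1}).
   Beyond some index k0, sigma^k, epsilon_k, delta_k and delta_k / (lambda + ell_k)
   are small; the stopping test then puts every model value within beta of
   f^k_p(x^{k0,i+1}) and the last two inner iterates within beta of each other, so
   the KKT relation exhibits -lambda (x^{k0,i+1} - x^{k0,i}), of norm at most
   delta_k0 <= eta, in the beta-enlarged A-subdifferential. *)

From Pilot Require Import Defs.
From HB Require Import structures.
From mathcomp Require Import all_boot all_order all_algebra.
From mathcomp Require Import all_classical all_reals all_analysis.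
From mathcomp Require Import ring lra.
Import Order.TTheory GRing.Theory Num.Theory numFieldNormedType.Exports.
Local Open Scope classical_set_scope.
Local Open Scope ring_scope.

Section Euclidean.
Context {R : realType} {n : nat}.
Implicit Types u v w : 'rV[R]_n.

Lemma dotvC u v : dotv u v = dotv v u.
Proof. by apply: eq_bigr => i _; rewrite mulrC. Qed.

Lemma dotvDr u v w : dotv u (v + w) = dotv u v + dotv u w.
Proof. by rewrite /dotv -big_split; apply: eq_bigr => i _; rewrite !mxE mulrDr. Qed.

Lemma dotvZr u v (t : R) : dotv u (t *: v) = t * dotv u v.
Proof. by rewrite /dotv mulr_sumr; apply: eq_bigr => i _; rewrite !mxE mulrCA. Qed.

Lemma dotvNr u v : dotv u (- v) = - dotv u v.
Proof. by rewrite -scaleN1r dotvZr mulN1r. Qed.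

Lemma dotvBr u v w : dotv u (v - w) = dotv u v - dotv u w.
Proof. by rewrite dotvDr dotvNr. Qed.

Lemma dotv0r u : dotv u 0 = 0.
Proof. by rewrite -(scale0r 0) dotvZr mul0r. Qed.

Lemma dotvDl u v w : dotv (v + w) u = dotv v u + dotv w u.
Proof. by rewrite dotvC dotvDr !(dotvC u). Qed.

Lemma dotvZl u v (t : R) : dotv (t *: v) u = t * dotv v u.
Proof. by rewrite dotvC dotvZr dotvC. Qed.

Lemma dotvNl u v : dotv (- v) u = - dotv v u.
Proof. by rewrite dotvC dotvNr dotvC. Qed.

Lemma dotvBl u v w : dotv (v - w) u = dotv v u - dotv w u.
Proof. by rewrite dotvDl dotvNl. Qed.

Lemma dotv0l u : dotv 0 u = 0.
Proof. by rewrite dotvC dotv0r. Qed.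

Lemma dotv_suml (I : finType) (F : I -> 'rV[R]_n) u :
  dotv (\sum_i F i) u = \sum_i dotv (F i) u.
Proof. by elim/big_rec2: _ => [|i x y _ <-]; rewrite ?dotv0l ?dotvDl. Qed.

Lemma dotvv_ge0 u : 0 <= dotv u u.
Proof. by rewrite sumr_ge0 // => i _; rewrite -expr2 sqr_ge0. Qed.

Lemma dotvv_eq0 u : dotv u u = 0 -> u = 0.
Proof.
move=> /eqP; rewrite psumr_eq0 => [/allP uu0|i _]; last by rewrite -expr2 sqr_ge0.
apply/rowP => i; have /implyP := uu0 i (mem_index_enum i).
by rewrite mxE mulf_eq0 orbb => /(_ isT) /eqP.
Qed.

Lemma enorm_sqr u : enorm u ^+ 2 = dotv u u.
Proof.
rewrite sqr_sqrtr; last by rewrite sumr_ge0 // => i _; rewrite sqr_ge0.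
by apply: eq_bigr => i _; rewrite expr2.
Qed.

Lemma enormZ (t : R) u : enorm (t *: u) = `|t| * enorm u.
Proof.
rewrite /enorm -sqrtr_sqr -sqrtrM ?sqr_ge0 // mulr_sumr.
by congr Num.sqrt; apply: eq_bigr => i _; rewrite mxE exprMn.
Qed.

Lemma enormN u : enorm (- u) = enorm u.
Proof. by rewrite -scaleN1r enormZ normrN1 mul1r. Qed.

Lemma enorm0 : enorm (0 : 'rV[R]_n) = 0.
Proof. by rewrite -(scale0r 0) enormZ normr0 mul0r. Qed.

Lemma dotvv_convex (t : R) u v : 0 <= t <= 1 ->
  dotv (t *: u + (1 - t) *: v) (t *: u + (1 - t) *: v) <= t * dotv u u + (1 - t) * dotv v v.
Proof.
move=> /andP[t0 t1]; have := dotvv_ge0 (u - v).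
rewrite !dotvBl !dotvBr !dotvDl !dotvDr !dotvZl !dotvZr (dotvC v u).
have : 0 <= t * (1 - t) by rewrite mulr_ge0 // subr_ge0.
nra.
Qed.

Lemma eq0_of_dotv_quadratic_ge0 (h : 'rV[R]_n) (a : R) : 0 <= a ->
  (forall e, 0 <= dotv h e + a * dotv e e) -> h = 0.
Proof.
move=> a0 hq; apply: dotvv_eq0; apply/eqP; rewrite eq_le dotvv_ge0 andbT.
have a1 : 0 < a + 1 by rewrite ltr_pwDr.
have := hq (- (a + 1)^-1 *: h); rewrite dotvZr dotvZl dotvZr.
have -> : - (a + 1)^-1 * dotv h h + a * (- (a + 1)^-1 * (- (a + 1)^-1 * dotv h h)) =
          - dotv h h / (a + 1) ^+ 2 by field; rewrite gt_eqF.
by rewrite pmulr_lge0 ?invr_gt0 ?exprn_gt0 // oppr_ge0.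
Qed.

(* [u0] is only needed when [k = 0], where the form vanishes. *)
Lemma scaled_subgradient (f : 'rV[R]_n -> R) x u0 h (k : R) :
  subdiff f x u0 -> 0 <= k -> (forall d, dotv h d <= k * (f (x + d) - f x)) ->
  exists2 u, subdiff f x u & h = k *: u.
Proof.
move=> fu0; rewrite le_eqVlt => /orP[/eqP<- | k0] hd.
  exists u0 => //; rewrite scale0r; apply: dotvv_eq0; apply/eqP.
  by rewrite eq_le dotvv_ge0 andbT; have := hd h; rewrite mul0r.
exists (k^-1 *: h); last by rewrite scalerA divff ?gt_eqF // scale1r.
move=> z; have := hd (z - x); rewrite [x + _]addrC subrK dotvZl -lerBrDl => hz.
by rewrite mulrC ler_pdivrMr // mulrC.
Qed.

End Euclidean.

Section ConvexCombination.
Context {R : realType} {V : lmodType R}.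

Lemma convex_combB (t : R) (x1 x2 y : V) :
  t *: x1 + (1 - t) *: x2 - y = t *: (x1 - y) + (1 - t) *: (x2 - y).
Proof. by rewrite !scalerBr addrACA -opprD -scalerDl subrKC scale1r. Qed.

Lemma convex_combD (t : R) (x1 x2 d1 d2 : V) :
  t *: x1 + (1 - t) *: x2 + (t *: d1 + (1 - t) *: d2) = t *: (x1 + d1) + (1 - t) *: (x2 + d2).
Proof. by rewrite !scalerDr addrACA. Qed.

End ConvexCombination.

Lemma sum_single_support {R : realType} (I : finType) (F : I -> R) (Pr : pred I) i :
  (forall j, j != i -> F j = 0) -> \sum_(j | Pr j) F j = if Pr i then F i else 0.
Proof.
move=> Fi; case: ifP => Pri; first by rewrite (bigD1 i) //= big1 ?addr0 // => j /andP[_ /Fi].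
by rewrite big1 // => j Prj; apply: Fi; apply: contraTneq Prj => ->; rewrite Pri.
Qed.

Section PerturbationDuality.
Context {R : realType} {V : lmodType R} {T : finType}.
Implicit Types (c P : T -> R) (x : V).

Definition fdot c P : R := \sum_z c z * P z.
Definition fcomb (t : R) (P1 P2 : T -> R) : T -> R := fun z => t * P1 z + (1 - t) * P2 z.
Definition supported_on (s : seq T) P := forall z, z \notin s -> P z = 0.
Definition fshift (i : T) P (a : R) : T -> R := fun z => P z + a * (z == i)%:R.

Definition jointly_convex (J : V -> (T -> R) -> R) : Prop :=
  forall x1 x2 P1 P2 t, 0 <= t <= 1 ->
    J (t *: x1 + (1 - t) *: x2) (fcomb t P1 P2) <= t * J x1 P1 + (1 - t) * J x2 P2.

Lemma fdot_fcomb c t P1 P2 : fdot c (fcomb t P1 P2) = t * fdot c P1 + (1 - t) * fdot c P2.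
Proof. by rewrite /fdot !mulr_sumr -big_split; apply: eq_bigr => z _ /=; rewrite /fcomb; ring. Qed.

Lemma fdot_fshiftl c P i a : fdot (fshift i c a) P = fdot c P + a * P i.
Proof.
rewrite /fdot /fshift (eq_bigr (fun z => c z * P z + a * ((z == i)%:R * P z))); last first.
  by move=> z _ /=; ring.
rewrite big_split /= -mulr_sumr; congr (_ + _ * _).
by rewrite (bigD1 i) //= eqxx mul1r big1 ?addr0 // => z /negPf ->; rewrite mul0r.
Qed.

Lemma fshift0 i P : fshift i P 0 = P.
Proof. by apply/funext => z; rewrite /fshift mul0r addr0. Qed.

Lemma fshiftNK i P a : fshift i (fshift i P (- a)) a = P.
Proof. by apply/funext => z; rewrite /fshift mulNr subrK. Qed.

Section CoordinateSlope.
Variables (Q : V -> (T -> R) -> R) (s : seq T) (i : T).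
Hypothesis Q_convex : jointly_convex Q.
Hypothesis Q_ge0 : forall x P, supported_on s P -> 0 <= Q x P.

Let left_slope a := exists x P u, [/\ supported_on s P, 0 < u & a = - Q x (fshift i P (- u)) / u].
Let right_slope b := exists x P u, [/\ supported_on s P, 0 < u & b = Q x (fshift i P u) / u].

(* Convexity of [Q] between the two shifted points, with the weight [u2 / (u1 + u2)]
   that cancels the shift in coordinate [i]. *)
Lemma left_slope_le_right a b : left_slope a -> right_slope b -> a <= b.
Proof.
move=> [x1 [P1 [u1 [sP1 u1p ->]]]] [x2 [P2 [u2 [sP2 u2p ->]]]].
set t := u2 / (u1 + u2); have u12 : 0 < u1 + u2 by rewrite addr_gt0.
have t01 : 0 <= t <= 1.
  by apply/andP; split; [rewrite divr_ge0 ?ltW | rewrite ler_pdivrMr // mul1r lerDr ltW].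
have sP : supported_on s (fcomb t (fshift i P1 (- u1)) (fshift i P2 u2)).
  by move=> z zs; rewrite /fcomb /fshift sP1 // sP2 // !add0r /t; field; rewrite gt_eqF.
have := Q_convex x1 x2 (fshift i P1 (- u1)) (fshift i P2 u2) _ t01.
move: (@Q_ge0 (t *: x1 + (1 - t) *: x2) _ sP).
set q1 := Q x1 _; set q2 := Q x2 _ => q0 qc.
have qpos : 0 <= u2 * q1 + u1 * q2.
  have -> : u2 * q1 + u1 * q2 = (u1 + u2) * (t * q1 + (1 - t) * q2).
    by rewrite /t; field; rewrite gt_eqF.
  exact: mulr_ge0 (ltW u12) (le_trans q0 qc).
rewrite -subr_ge0 (_ : _ - _ = (u2 * q1 + u1 * q2) / (u1 * u2)).
  by rewrite divr_ge0 // mulr_ge0 ?ltW.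
by field; rewrite ?gt_eqF.
Qed.

Lemma coordinate_slope : exists ci : R, forall x P u,
  supported_on s P -> ci * u <= Q x (fshift i P u).
Proof.
have s0 : supported_on s (fun=> 0) by [].
have lA : left_slope (- Q 0 (fshift i (fun=> 0) (- 1)) / 1) by exists 0, (fun=> 0), 1.
have rB : right_slope (Q 0 (fshift i (fun=> 0) 1) / 1) by exists 0, (fun=> 0), 1.
have supA : has_sup left_slope.
  split; first by eexists; exact: lA.
  by eexists => a /left_slope_le_right; apply; exact: rB.
exists (sup left_slope) => x P u sP.
have [un|up|->] := ltgtP u 0; last by rewrite mulr0 fshift0 Q_ge0.
- have : left_slope (- Q x (fshift i P (- - u)) / - u).
    by exists x, P, (- u); rewrite oppr_gt0.
  by move/(sup_upper_bound supA); rewrite opprK divrNN ler_ndivrMr.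
- have : right_slope (Q x (fshift i P u) / u) by exists x, P, u.
  move=> rb; rewrite -ler_pdivlMr //; apply: ge_sup; first by eexists; exact: lA.
  by move=> a /left_slope_le_right; apply.
Qed.

End CoordinateSlope.

Lemma supported_perturbation_subgradient (J : V -> (T -> R) -> R) (xb : V) :
  jointly_convex J -> (forall x, J xb (fun=> 0) <= J x (fun=> 0)) ->
  forall s : seq T, exists c, supported_on s c /\
    forall x P, supported_on s P -> J xb (fun=> 0) + fdot c P <= J x P.
Proof.
move=> J_convex xb_min; set J0 := J xb (fun=> 0).
elim=> [|i s [c [sc IH]]].
  exists (fun=> 0); split => // x P sP.
  have -> : P = (fun=> 0) by apply/funext => z; exact: sP.
  by rewrite /fdot big1 ?addr0 // => z _; rewrite mulr0.
pose Q x P := J x P - J0 - fdot c P.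
have Q_convex : jointly_convex Q.
  by move=> x1 x2 P1 P2 t t01; rewrite /Q fdot_fcomb; have := J_convex x1 x2 P1 P2 t t01; lra.
have Q_ge0 x P : supported_on s P -> 0 <= Q x P.
  by move=> sP; rewrite /Q subr_ge0 lerBrDr addrC IH.
have [ci Hci] := @coordinate_slope Q s i Q_convex Q_ge0.
exists (fshift i c ci); split => [z|x P sP].
  rewrite in_cons negb_or => /andP[zi zs].
  by rewrite /fshift sc // (negPf zi) mulr0 addr0.
have sP0 : supported_on s (fshift i P (- P i)).
  move=> z zs; rewrite /fshift; have [->|zi] := eqVneq z i; first by rewrite mulr1 addrN.
  by rewrite mulr0 addr0 sP // in_cons negb_or zi.
by have := Hci x _ (P i) sP0; rewrite fshiftNK fdot_fshiftl /Q; lra.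
Qed.

Lemma perturbation_subgradient (J : V -> (T -> R) -> R) (xb : V) :
  jointly_convex J -> (forall x, J xb (fun=> 0) <= J x (fun=> 0)) ->
  exists c, forall x P, J xb (fun=> 0) + fdot c P <= J x P.
Proof.
move=> J_convex xb_min.
have [c [_ Hc]] := @supported_perturbation_subgradient J xb J_convex xb_min (enum T).
by exists c => x P; apply: Hc => z; rewrite mem_enum.
Qed.

End PerturbationDuality.

Section MonotoneDecomposition.
Context {R : realType}.

Definition convex_nondecr (f : R -> R) :=
  convex_rfn f /\ {homo f : s t / s <= t}.
Definition convex_nonincr (f : R -> R) :=
  convex_rfn f /\ {homo f : s t / s <= t >-> s >= t}.

Lemma convex_rfn_cst (a : R) : convex_rfn (fun=> a).
Proof. by move=> x y t _; rewrite -mulrDl subrKC mul1r. Qed.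

Lemma convex_rfnDr (f : R -> R) (a : R) : convex_rfn f -> convex_rfn (fun z => f z + a).
Proof. by move=> cf x y t t01; have := cf x y t t01; lra. Qed.

Section Argmin.
Variables (psi : R -> R) (zs : R).
Hypotheses (psi_convex : convex_rfn psi) (zs_min : forall z, psi zs <= psi z).

Lemma argmin_convex_homo_right a b : zs <= a -> a <= b -> psi a <= psi b.
Proof.
move=> za ab; have [bz|zb] := eqVneq b zs.
  by have -> : a = b by apply/le_anti; rewrite ab /= bz za.
have bz0 : 0 < b - zs by rewrite subr_gt0 lt_neqAle eq_sym zb (le_trans za ab).
set t := (b - a) / (b - zs).
have t01 : 0 <= t <= 1.
  by apply/andP; split; [apply: divr_ge0; lra | rewrite ler_pdivrMr // mul1r; lra].
have -> : a = t * zs + (1 - t) * b by rewrite /t; field; rewrite gt_eqF.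
have := psi_convex zs b t t01; have := zs_min b; move: t01 => /andP[t0 t1]; nra.
Qed.

Lemma argmin_convex_homo_left a b : a <= b -> b <= zs -> psi b <= psi a.
Proof.
move=> ab bz; have [az|za] := eqVneq a zs.
  by have -> : b = a by apply/le_anti; rewrite ab andbT az bz.
have az0 : 0 < zs - a by rewrite subr_gt0 lt_neqAle za (le_trans ab bz).
set t := (b - a) / (zs - a).
have t01 : 0 <= t <= 1.
  by apply/andP; split; [apply: divr_ge0; lra | rewrite ler_pdivrMr // mul1r; lra].
have -> : b = t * zs + (1 - t) * a by rewrite /t; field; rewrite gt_eqF.
have := psi_convex zs a t t01; have := zs_min a; move: t01 => /andP[t0 t1]; nra.
Qed.

Lemma convex_nondecr_max_argmin : convex_nondecr (fun z => psi (Num.max z zs)).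
Proof.
split=> [x y t t01 | s t st]; last first.
  apply: argmin_convex_homo_right; first by rewrite le_max lexx orbT.
  by rewrite ge_max !le_max st lexx orbT.
have /andP[t0 t1] := t01.
have hx : x <= Num.max x zs by rewrite le_max lexx.
have hy : y <= Num.max y zs by rewrite le_max lexx.
have hzx : zs <= Num.max x zs by rewrite le_max lexx orbT.
have hzy : zs <= Num.max y zs by rewrite le_max lexx orbT.
apply: le_trans (psi_convex _ _ _ t01); apply: argmin_convex_homo_right.
  by rewrite le_max lexx orbT.
by rewrite ge_max; apply/andP; split; nra.
Qed.

Lemma convex_nonincr_min_argmin : convex_nonincr (fun z => psi (Num.min z zs)).
Proof.
split=> [x y t t01 | s t st]; last first.
  apply: argmin_convex_homo_left; last by rewrite ge_min lexx orbT.
  by rewrite le_min !ge_min st lexx orbT.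
have /andP[t0 t1] := t01.
have hx : Num.min x zs <= x by rewrite ge_min lexx.
have hy : Num.min y zs <= y by rewrite ge_min lexx.
have hzx : Num.min x zs <= zs by rewrite ge_min lexx orbT.
have hzy : Num.min y zs <= zs by rewrite ge_min lexx orbT.
apply: le_trans (psi_convex _ _ _ t01); apply: argmin_convex_homo_left; last first.
  by rewrite ge_min lexx orbT.
by rewrite le_min; apply/andP; split; nra.
Qed.

End Argmin.

Lemma mono_decomp_real (psi : R -> R) (up down : R -> \bar R) :
  convex_rfn psi -> mono_decomp (fun z => (psi z)%:E) up down ->
  exists U Dn : R -> R, [/\ up = (fun z => (U z)%:E), down = (fun z => (Dn z)%:E),
                           convex_nondecr U & convex_nonincr Dn].
Proof.
move=> psi_convex [nd_case [ni_case other_case]].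
have [nd|nnd] := pselect (nondecr (fun z => (psi z)%:E)).
  have [-> ->] := nd_case nd; exists psi, (fun=> 0); split => //.
  by split=> //; exact: convex_rfn_cst.
have [ni|nni] := pselect (nonincr (fun z => (psi z)%:E)).
  have [-> ->] := ni_case nnd ni; exists (fun=> 0), psi; split => //.
  by split=> //; exact: convex_rfn_cst.
have [zs [zs_min hz]] := other_case nnd nni.
have zs_min' z : psi zs <= psi z by rewrite -lee_fin.
exists (fun z => psi (Num.max z zs)), (fun z => psi (Num.min z zs) - psi zs); split.
- apply/funext => z /=; have [zl|zg] := leP z zs.
    by rewrite ((hz z).1 zl).1.
  by rewrite ((hz z).2 zg).1.
- apply/funext => z /=; have [zl|zg] := leP z zs.
    by rewrite ((hz z).1 zl).2.
  by rewrite ((hz z).2 zg).2 subrr.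
- exact: convex_nondecr_max_argmin.
- have [cv mo] := @convex_nonincr_min_argmin psi zs psi_convex zs_min'.
  by split=> [|s t /mo]; [exact: convex_rfnDr | rewrite lerD2r].
Qed.

End MonotoneDecomposition.

Lemma normalized_multiplier_ineq {R : realType} (a b f s Uf Us : R) :
  b < 0 -> a * (f - s) + b * (Us - Uf) <= 0 -> Uf + a / b * (s - f) <= Us.
Proof.
move=> b_lt0 h; rewrite -subr_ge0.
rewrite (_ : Us - _ = (a * (f - s) + b * (Us - Uf)) / b); last by field; rewrite lt_eqF.
by rewrite ler_ndivlMr // mul0r.
Qed.

Definition single {m : nat} {V : zmodType} (p : 'I_m) (v : V) : 'I_m -> V :=
  fun q => if q == p then v else 0.

(* Coordinates of a perturbation of the subproblem: a vector added to the argument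
   of g_p in the upper model and one added to the argument of h_p in the lower model,
   a level shift of every upper and every lower model, and one of the objective. *)
Definition pert_index (m n : nat) : Type :=
  ((('I_m * 'I_n) + ('I_m * 'I_n)) + (('I_m + 'I_m) + 'I_1))%type.

Section Perturbation.
Context {R : realType} {n m : nat}.
Local Notation vec := 'rV[R]_n.
Local Notation pert := (pert_index m n).

Definition pert_g (v : pert -> R) (p : 'I_m) : vec := \row_i v (inl (inl (p, i))).
Definition pert_h (v : pert -> R) (p : 'I_m) : vec := \row_i v (inl (inr (p, i))).
Definition pert_up (v : pert -> R) (p : 'I_m) : R := v (inr (inl (inl p))).
Definition pert_lo (v : pert -> R) (p : 'I_m) : R := v (inr (inl (inr p))).
Definition pert_obj (v : pert -> R) : R := v (inr (inr ord0)).

Definition pack_pert (Dg Dh : 'I_m -> vec) (Wu Wl : 'I_m -> R) (W0 : R) : pert -> R :=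
  fun z => match z with
  | inl (inl (p, i)) => Dg p 0 i
  | inl (inr (p, i)) => Dh p 0 i
  | inr (inl (inl p)) => Wu p
  | inr (inl (inr p)) => Wl p
  | inr (inr _) => W0 end.

Lemma pert_g_pack Dg Dh Wu Wl W0 : pert_g (pack_pert Dg Dh Wu Wl W0) = Dg.
Proof. by apply/funext => p; apply/rowP => i; rewrite mxE. Qed.

Lemma pert_h_pack Dg Dh Wu Wl W0 : pert_h (pack_pert Dg Dh Wu Wl W0) = Dh.
Proof. by apply/funext => p; apply/rowP => i; rewrite mxE. Qed.

Lemma pert_g_fcomb t v1 v2 :
  pert_g (fcomb t v1 v2) = fun p => t *: pert_g v1 p + (1 - t) *: pert_g v2 p.
Proof. by apply/funext => p; apply/rowP => i; rewrite !mxE. Qed.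

Lemma pert_h_fcomb t v1 v2 :
  pert_h (fcomb t v1 v2) = fun p => t *: pert_h v1 p + (1 - t) *: pert_h v2 p.
Proof. by apply/funext => p; apply/rowP => i; rewrite !mxE. Qed.

Lemma pert_up_fcomb t v1 v2 :
  pert_up (fcomb t v1 v2) = fun p => t * pert_up v1 p + (1 - t) * pert_up v2 p.
Proof. by []. Qed.

Lemma pert_lo_fcomb t v1 v2 :
  pert_lo (fcomb t v1 v2) = fun p => t * pert_lo v1 p + (1 - t) * pert_lo v2 p.
Proof. by []. Qed.

Lemma pert_g0 : pert_g (fun=> 0) = fun=> 0.
Proof. by apply/funext => p; apply/rowP => i; rewrite !mxE. Qed.

Lemma pert_h0 : pert_h (fun=> 0) = fun=> 0.
Proof. by apply/funext => p; apply/rowP => i; rewrite !mxE. Qed.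

Lemma fdot_pack c Dg Dh Wu Wl W0 :
  fdot c (pack_pert Dg Dh Wu Wl W0) =
  \sum_p dotv (pert_g c p) (Dg p) + \sum_p dotv (pert_h c p) (Dh p) +
  \sum_p pert_up c p * Wu p + \sum_p pert_lo c p * Wl p + pert_obj c * W0.
Proof.
rewrite /fdot !big_sumType /= big_ord1 !addrA; congr (_ + _ + _ + _ + _).
- rewrite (eq_bigr (fun pi => c (inl (inl (pi.1, pi.2))) * Dg pi.1 0 pi.2)); last by case.
  rewrite -(pair_bigA _ (fun p i => c (inl (inl (p, i))) * Dg p 0 i)).
  by apply: eq_bigr => p _; apply: eq_bigr => i _; rewrite mxE.
- rewrite (eq_bigr (fun pi => c (inl (inr (pi.1, pi.2))) * Dh pi.1 0 pi.2)); last by case.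
  rewrite -(pair_bigA _ (fun p i => c (inl (inr (p, i))) * Dh p 0 i)).
  by apply: eq_bigr => p _; apply: eq_bigr => i _; rewrite mxE.
Qed.

Lemma sum_dotv_single (C : 'I_m -> vec) p d : \sum_q dotv (C q) (single p d q) = dotv (C p) d.
Proof.
rewrite (sum_single_support _ _ xpredT p) /single ?eqxx // => q /negPf ->.
by rewrite dotv0r.
Qed.

Lemma sum_mul_single (f : 'I_m -> R) p w : \sum_q f q * single p w q = f p * w.
Proof.
rewrite (sum_single_support _ _ xpredT p) /single ?eqxx // => q /negPf ->.
by rewrite mulr0.
Qed.

End Perturbation.

Section SubproblemKKT.
Context {R : realType} {n m : nat} (P : cp1 R n m) (M : padc R n m).
Local Notation vec := 'rV[R]_n.
Local Notation m1 := (m1 P).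
Local Notation pert := (pert_index m n).
Variables (k : nat) (y xb : vec) (U Dn : 'I_m -> R -> R).

Definition fup_pert p x (d : vec) (w : R) : R :=
  gk P k p (x + d) - hk P k p y - dotv (asel M k p y) (x - y) + sigma M k p - w.
Definition flo_pert p x (d : vec) (w : R) : R :=
  gk P k p y + dotv (bsel M k p y) (x - y) - hk P k p (x + d) - w.
Definition prox_term (x : vec) : R := lam M / 2 * enorm (x - y) ^+ 2.
Definition model_obj (x : vec) : R :=
  \sum_(p < m | (p < m1)%N) (U p (fup P M k p x y) + Dn p (flo P M k p x y)) + prox_term x.

Definition pert_excess x (v : pert -> R) : R :=
  \sum_(p < m | (p < m1)%N) (U p (fup_pert p x (pert_g v p) (pert_up v p)) +
                             Dn p (flo_pert p x (pert_h v p) (pert_lo v p)))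
  + prox_term x - model_obj xb - pert_obj v.
Definition pert_gap x (v : pert -> R) : R :=
  \big[Num.max/pert_excess x v]_(p < m | (m1 <= p)%N) fup_pert p x (pert_g v p) (pert_up v p).

Lemma fup_pert0 p x : fup_pert p x 0 0 = fup P M k p x y.
Proof. by rewrite /fup_pert /fup addr0 subr0. Qed.

Lemma flo_pert0 p x : flo_pert p x 0 0 = flo P M k p x y.
Proof. by rewrite /flo_pert /flo addr0 subr0. Qed.

Lemma fup_pert_level p x w : fup_pert p x 0 w = fup P M k p x y - w.
Proof. by rewrite /fup_pert /fup addr0. Qed.

Lemma flo_pert_level p x w : flo_pert p x 0 w = flo P M k p x y - w.
Proof. by rewrite /flo_pert /flo addr0. Qed.

Lemma fup_pert_g p d : fup_pert p xb d (gk P k p (xb + d) - gk P k p xb) = fup P M k p xb y.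
Proof. by rewrite /fup_pert /fup; lra. Qed.

Lemma flo_pert_h p d : flo_pert p xb d (- (hk P k p (xb + d) - hk P k p xb)) = flo P M k p xb y.
Proof. by rewrite /flo_pert /flo; lra. Qed.

Lemma fup_pert_shift p e :
  fup_pert p (xb + e) (- e) (- dotv (asel M k p y) e) = fup P M k p xb y.
Proof. by rewrite /fup_pert /fup addrK !dotvDr; lra. Qed.

Lemma flo_pert_shift p e :
  flo_pert p (xb + e) (- e) (dotv (bsel M k p y) e) = flo P M k p xb y.
Proof. by rewrite /flo_pert /flo addrK !dotvDr; lra. Qed.

Lemma prox_term_shift e :
  prox_term (xb + e) - prox_term xb = lam M * dotv (xb - y) e + lam M / 2 * dotv e e.
Proof.
rewrite /prox_term !enorm_sqr (addrAC xb e); move: (xb - y) => w.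
by rewrite dotvDl !dotvDr (dotvC e w); lra.
Qed.

Hypothesis gh_convex : forall p, convex_fn (gk P k p) /\ convex_fn (hk P k p).
Hypothesis UDn_mono : forall p : 'I_m, (p < m1)%N -> convex_nondecr (U p) /\ convex_nonincr (Dn p).
Hypothesis lam_gt0 : 0 < lam M.

Lemma fup_pert_convex p x1 x2 d1 d2 w1 w2 t : 0 <= t <= 1 ->
  fup_pert p (t *: x1 + (1 - t) *: x2) (t *: d1 + (1 - t) *: d2) (t * w1 + (1 - t) * w2) <=
  t * fup_pert p x1 d1 w1 + (1 - t) * fup_pert p x2 d2 w2.
Proof.
move=> t01; rewrite /fup_pert convex_combD convex_combB [dotv _ (t *: _ + _)]dotvDr !dotvZr.
have := (gh_convex p).1 (x1 + d1) (x2 + d2) t t01; lra.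
Qed.

Lemma flo_pert_concave p x1 x2 d1 d2 w1 w2 t : 0 <= t <= 1 ->
  t * flo_pert p x1 d1 w1 + (1 - t) * flo_pert p x2 d2 w2 <=
  flo_pert p (t *: x1 + (1 - t) *: x2) (t *: d1 + (1 - t) *: d2) (t * w1 + (1 - t) * w2).
Proof.
move=> t01; rewrite /flo_pert convex_combD convex_combB [dotv _ (t *: _ + _)]dotvDr !dotvZr.
have := (gh_convex p).2 (x1 + d1) (x2 + d2) t t01; lra.
Qed.

Lemma prox_term_convex x1 x2 t : 0 <= t <= 1 ->
  prox_term (t *: x1 + (1 - t) *: x2) <= t * prox_term x1 + (1 - t) * prox_term x2.
Proof.
move=> t01; rewrite /prox_term convex_combB !enorm_sqr.
have := dotvv_convex t (x1 - y) (x2 - y) t01.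
have : 0 <= lam M / 2 by rewrite divr_ge0 // ltW.
by move: t01 => /andP[t0 t1]; nra.
Qed.

(* The upper models enter through a nondecreasing convex outer function and the
   lower (concave) models through a nonincreasing convex one. *)
Lemma pert_excess_convex : jointly_convex pert_excess.
Proof.
move=> x1 x2 v1 v2 t t01.
rewrite /pert_excess pert_g_fcomb pert_h_fcomb pert_up_fcomb pert_lo_fcomb /=.
set S := \sum_(p < m | _) _; set S1 := \sum_(p < m | _) _; set S2 := \sum_(p < m | _) _.
have : S <= t * S1 + (1 - t) * S2.
  rewrite /S /S1 /S2 !mulr_sumr -big_split /=; apply: ler_sum => p pm.
  have [[U_cvx U_mono] [Dn_cvx Dn_mono]] := UDn_mono p pm.
  have := U_mono _ _ (fup_pert_convex p x1 x2 (pert_g v1 p) (pert_g v2 p)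
                        (pert_up v1 p) (pert_up v2 p) t t01).
  have := Dn_mono _ _ (flo_pert_concave p x1 x2 (pert_h v1 p) (pert_h v2 p)
                         (pert_lo v1 p) (pert_lo v2 p) t t01).
  have := U_cvx (fup_pert p x1 (pert_g v1 p) (pert_up v1 p))
                (fup_pert p x2 (pert_g v2 p) (pert_up v2 p)) t t01.
  have := Dn_cvx (flo_pert p x1 (pert_h v1 p) (pert_lo v1 p))
                 (flo_pert p x2 (pert_h v2 p) (pert_lo v2 p)) t t01.
  lra.
rewrite /pert_obj /fcomb.
have := prox_term_convex x1 x2 t t01; lra.
Qed.

Lemma pert_gap_convex : jointly_convex pert_gap.
Proof.
move=> x1 x2 v1 v2 t /[dup] t01 /andP[t0 t1].
have t1' : 0 <= 1 - t by rewrite subr_ge0.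
apply: bigmax_le.
  apply: le_trans (pert_excess_convex _ _ _ _ _ t01) _.
  by apply: lerD; apply: ler_wpM2l => //; apply: bigmax_ge_id.
move=> j jm; rewrite pert_g_fcomb.
apply: le_trans (fup_pert_convex _ _ _ _ _ _ _ _ t01) _.
by apply: lerD; apply: ler_wpM2l => //; apply: le_bigmax_cond.
Qed.

Hypothesis xb_sol : subsol P M k y xb.
Hypothesis phiU_real : forall p : 'I_m, (p < m1)%N -> phiU P p = (fun z => (U p z)%:E).
Hypothesis phiD_real : forall p : 'I_m, (p < m1)%N -> phiD P p = (fun z => (Dn p z)%:E).

Lemma subobj_model x : subobj P M k x y = (model_obj x)%:E.
Proof.
rewrite /subobj /model_obj EFinD -sumEFin; congr (_ + _)%E.
by apply: eq_bigr => p pm; rewrite /Fhat phiU_real // phiD_real.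
Qed.

Lemma fup_sol_le0 (j : 'I_m) : (m1 <= j)%N -> fup P M k j xb y <= 0.
Proof. exact: xb_sol.1. Qed.

Lemma pert_excess_sol0 : pert_excess xb (fun=> 0) = 0.
Proof.
rewrite /pert_excess pert_g0 pert_h0 /model_obj /pert_obj.
under eq_bigr do rewrite fup_pert0 flo_pert0.
by rewrite subrr subr0.
Qed.

Lemma pert_gap_sol0 : pert_gap xb (fun=> 0) = 0.
Proof.
rewrite /pert_gap pert_excess_sol0 bigmax_eq_id // => j jm.
by rewrite pert_g0 fup_pert0 fup_sol_le0.
Qed.

Lemma pert_gap_min x : pert_gap xb (fun=> 0) <= pert_gap x (fun=> 0).
Proof.
rewrite pert_gap_sol0; have [feas|] := pselect (sub_feas P M k x y).
  apply: le_trans (bigmax_ge_id _ _ _ _); rewrite /pert_excess pert_g0 pert_h0 /pert_obj.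
  under eq_bigr do rewrite fup_pert0 flo_pert0.
  by have := xb_sol.2 x feas; rewrite !subobj_model lee_fin /model_obj; lra.
move=> /existsNP[j /not_implyP[jm /negP]]; rewrite -ltNge => fup_pos.
apply: le_trans (ltW fup_pos) _; rewrite /pert_gap pert_g0 -fup_pert0.
exact: (le_bigmax_cond _ (fun p => fup_pert p x 0 (pert_up (fun=> 0) p)) jm).
Qed.

Lemma exists_multipliers : exists c, forall x v, fdot c v <= pert_gap x v.
Proof.
have [c Hc] := @perturbation_subgradient _ _ _ _ _ pert_gap_convex pert_gap_min.
by exists c => x v; have := Hc x v; rewrite pert_gap_sol0 add0r.
Qed.

Lemma pert_excess_at_sol Dg Dh Wu Wl W0 :
  \sum_(p < m | (p < m1)%N) (U p (fup_pert p xb (Dg p) (Wu p)) + Dn p (flo_pert p xb (Dh p) (Wl p)))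
    + prox_term xb - model_obj xb - W0 =
  \sum_(p < m | (p < m1)%N) (U p (fup_pert p xb (Dg p) (Wu p)) + Dn p (flo_pert p xb (Dh p) (Wl p))
                             - (U p (fup P M k p xb y) + Dn p (flo P M k p xb y))) - W0.
Proof. by rewrite /model_obj sumrB; lra. Qed.

Hypothesis asel_subgrad : forall p x, subdiff (hk P k p) x (asel M k p x).
Hypothesis bsel_subgrad : forall p x, subdiff (gk P k p) x (bsel M k p x).
Hypothesis A6 : Assumption6 P M.

Definition subproblem_kkt (y1 y2 : 'I_m -> R) (v1 v2 : 'I_m -> vec) : Prop :=
  [/\ forall p, dup P M k p xb y (v1 p), forall p, dlo P M k p xb y (v2 p),
      \sum_p (y1 p *: v1 p + y2 p *: v2 p) + lam M *: (xb - y) = 0,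
      (forall p : 'I_m, (p < m1)%N ->
        (forall s, U p (fup P M k p xb y) + y1 p * (s - fup P M k p xb y) <= U p s) /\
        (forall s, Dn p (flo P M k p xb y) + y2 p * (s - flo P M k p xb y) <= Dn p s)) &
      forall p : 'I_m, (m1 <= p)%N ->
        [/\ 0 <= y1 p, y1 p * fup P M k p xb y = 0 & y2 p = 0]].

Section Multipliers.
Variable c : pert -> R.
Hypothesis c_le_gap : forall x v, fdot c v <= pert_gap x v.

Lemma fdot_pack_le x Dg Dh Wu Wl W0 r :
  \sum_(p < m | (p < m1)%N) (U p (fup_pert p x (Dg p) (Wu p)) + Dn p (flo_pert p x (Dh p) (Wl p)))
    + prox_term x - model_obj xb - W0 <= r ->
  (forall j : 'I_m, (m1 <= j)%N -> fup_pert j x (Dg j) (Wu j) <= r) ->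
  fdot c (pack_pert Dg Dh Wu Wl W0) <= r.
Proof.
move=> obj_le con_le; apply: le_trans (c_le_gap x _) _; apply: bigmax_le.
  by rewrite /pert_excess pert_g_pack pert_h_pack.
by move=> j jm; rewrite pert_g_pack; exact: con_le.
Qed.

Lemma fdot_up_perturbation_le (p : 'I_m) (d : vec) (w W0 : R) :
  (if (p < m1)%N then U p (fup_pert p xb d w) - U p (fup P M k p xb y) else 0) <= W0 ->
  ((m1 <= p)%N -> fup_pert p xb d w <= 0) ->
  dotv (pert_g c p) d + pert_up c p * w + pert_obj c * W0 <= 0.
Proof.
move=> obj_le con_le.
have := @fdot_pack_le xb (single p d) (fun=> 0) (single p w) (fun=> 0) W0 0.
rewrite fdot_pack sum_dotv_single sum_mul_single /= -dotv_suml dotv0r -mulr_suml mulr0.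
rewrite !addr0; apply.
  rewrite pert_excess_at_sol (sum_single_support _ _ _ p) => [|q qp]; last first.
    by rewrite /single (negPf qp) fup_pert0 flo_pert0 subrr.
  by rewrite /single eqxx flo_pert0; case: ifP obj_le => _ obj_le; [lra | rewrite sub0r oppr_le0].
move=> j jm; rewrite /single /=; have [ejp|jp] := eqVneq j p.
  by move: jm; rewrite ejp; exact: con_le.
by rewrite fup_pert0 fup_sol_le0.
Qed.

Lemma fdot_lo_perturbation_le (p : 'I_m) (d : vec) (w W0 : R) :
  (if (p < m1)%N then Dn p (flo_pert p xb d w) - Dn p (flo P M k p xb y) else 0) <= W0 ->
  dotv (pert_h c p) d + pert_lo c p * w + pert_obj c * W0 <= 0.
Proof.
move=> obj_le.
have := @fdot_pack_le xb (fun=> 0) (single p d) (fun=> 0) (single p w) W0 0.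
rewrite fdot_pack sum_dotv_single sum_mul_single /= -dotv_suml dotv0r -mulr_suml mulr0.
rewrite !add0r addr0; apply.
  rewrite pert_excess_at_sol (sum_single_support _ _ _ p) => [|q qp]; last first.
    by rewrite /single (negPf qp) fup_pert0 flo_pert0 subrr.
  by rewrite /single eqxx fup_pert0; case: ifP obj_le => _ obj_le; [lra | rewrite sub0r oppr_le0].
by move=> j jm; rewrite fup_pert0 fup_sol_le0.
Qed.

Lemma pert_obj_le0 : pert_obj c <= 0.
Proof.
have := @fdot_pack_le xb (fun=> 0) (fun=> 0) (fun=> 0) (fun=> 0) 1 0.
rewrite fdot_pack /= -!dotv_suml !dotv0r -!mulr_suml !mulr0 !add0r mulr1; apply.
  rewrite pert_excess_at_sol big1 ?sub0r ?lerN10 // => q _.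
  by rewrite fup_pert0 flo_pert0 subrr.
by move=> j jm; rewrite fup_pert0 fup_sol_le0.
Qed.

(* Shifting every constraint level and the objective level down by 1 lowers the gap
   by 1. *)
Lemma multipliers_nontrivial : \sum_(q < m | (m1 <= q)%N) pert_up c q + pert_obj c <= -1.
Proof.
pose Wu (q : 'I_m) : R := if (m1 <= q)%N then 1 else 0.
have sumWu : \sum_q pert_up c q * Wu q = \sum_(q < m | (m1 <= q)%N) pert_up c q.
  by rewrite [RHS]big_mkcond; apply: eq_bigr => q _; rewrite /Wu; case: ifP; rewrite ?mulr1 ?mulr0.
have := @fdot_pack_le xb (fun=> 0) (fun=> 0) Wu (fun=> 0) 1 (-1).
rewrite fdot_pack sumWu /= -!dotv_suml !dotv0r -mulr_suml !mulr0 !add0r addr0 mulr1; apply.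
  rewrite pert_excess_at_sol big1 ?sub0r // => q qm.
  by rewrite /Wu leqNgt qm fup_pert0 flo_pert0 subrr.
by move=> j jm; rewrite /Wu jm fup_pert_level; have := fup_sol_le0 j jm; lra.
Qed.

Lemma fdot_shift_perturbation_le e :
  \sum_p dotv (pert_g c p) (- e) + \sum_p dotv (pert_h c p) (- e) +
  \sum_p pert_up c p * (- dotv (asel M k p y) e) + \sum_p pert_lo c p * dotv (bsel M k p y) e +
  pert_obj c * (prox_term (xb + e) - prox_term xb) <= 0.
Proof.
rewrite -fdot_pack; apply: (fdot_pack_le (xb + e)) => [|j jm] /=; last first.
  by rewrite fup_pert_shift fup_sol_le0.
under eq_bigr do rewrite fup_pert_shift flo_pert_shift.
by rewrite /model_obj; lra.
Qed.

Lemma pert_up_le0 p : pert_up c p <= 0.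
Proof.
have := fdot_up_perturbation_le p 0 1 0; rewrite dotv0r add0r mulr1 mulr0 addr0; apply.
  case: ifP => // pm; rewrite fup_pert_level subr_le0.
  by apply: (UDn_mono p pm).1.2; lra.
by move=> pm; rewrite fup_pert_level; have := fup_sol_le0 p pm; lra.
Qed.

Lemma pert_g_dominated p d :
  dotv (pert_g c p) d <= - pert_up c p * (gk P k p (xb + d) - gk P k p xb).
Proof.
have := fdot_up_perturbation_le p d (gk P k p (xb + d) - gk P k p xb) 0.
rewrite fup_pert_g subrr mulr0 addr0 mulNr => /(_ _ (fup_sol_le0 p)).
by case: ifP => _ /(_ (lexx _)); lra.
Qed.

Lemma pert_up_compl (p : 'I_m) : (m1 <= p)%N -> pert_up c p * fup P M k p xb y <= 0.
Proof.
move=> pm; have := fdot_up_perturbation_le p 0 (fup P M k p xb y) 0.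
by rewrite dotv0r add0r mulr0 addr0 fup_pert_level subrr ltnNge pm; apply.
Qed.

Lemma pert_up_subgrad (p : 'I_m) : (p < m1)%N -> forall s,
  pert_up c p * (fup P M k p xb y - s) + pert_obj c * (U p s - U p (fup P M k p xb y)) <= 0.
Proof.
move=> pm s; set f := fup P M k p xb y.
have := fdot_up_perturbation_le p 0 (f - s) (U p s - U p f).
by rewrite dotv0r add0r fup_pert_level subKr pm; apply => //; rewrite leqNgt pm.
Qed.

Lemma pert_lo_ge0 p : 0 <= pert_lo c p.
Proof.
have := fdot_lo_perturbation_le p 0 (-1) 0; rewrite dotv0r add0r mulr0 addr0 mulrN1 oppr_le0; apply.
case: ifP => // pm; rewrite flo_pert_level opprK subr_le0.
by apply: (UDn_mono p pm).2.2; lra.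
Qed.

Lemma pert_h_dominated p d :
  dotv (pert_h c p) d <= pert_lo c p * (hk P k p (xb + d) - hk P k p xb).
Proof.
have := fdot_lo_perturbation_le p d (- (hk P k p (xb + d) - hk P k p xb)) 0.
rewrite flo_pert_h subrr mulr0 addr0 mulrN.
by case: ifP => _ /(_ (lexx _)); lra.
Qed.

Lemma pert_lo_constraint (p : 'I_m) : (m1 <= p)%N -> pert_lo c p = 0.
Proof.
move=> pm; have := fdot_lo_perturbation_le p 0 1 0.
rewrite dotv0r add0r mulr0 addr0 mulr1 ltnNge pm => /(_ (lexx _)) lo_le0.
by apply/eqP; rewrite eq_le lo_le0 pert_lo_ge0.
Qed.

Lemma pert_lo_subgrad (p : 'I_m) : (p < m1)%N -> forall s,
  pert_lo c p * (flo P M k p xb y - s) + pert_obj c * (Dn p s - Dn p (flo P M k p xb y)) <= 0.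
Proof.
move=> pm s; set f := flo P M k p xb y.
have := fdot_lo_perturbation_le p 0 (f - s) (Dn p s - Dn p f).
by rewrite dotv0r add0r flo_pert_level subKr pm; apply.
Qed.

Lemma pert_g_subgrad p :
  exists u, subdiff (gk P k p) xb u /\ pert_g c p = - pert_up c p *: u.
Proof.
have up_ge0 : 0 <= - pert_up c p by rewrite oppr_ge0 pert_up_le0.
have [u] := @scaled_subgradient _ _ _ _ _ _ _ (bsel_subgrad p xb) up_ge0 (pert_g_dominated p).
by exists u.
Qed.

Lemma pert_h_subgrad p :
  exists u, subdiff (hk P k p) xb u /\ pert_h c p = pert_lo c p *: u.
Proof.
have [u] :=
  @scaled_subgradient _ _ _ _ _ _ _ (asel_subgrad p xb) (pert_lo_ge0 p) (pert_h_dominated p).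
by exists u.
Qed.

Section Stationarity.
Variables u u' : 'I_m -> vec.
Hypotheses (u_sub : forall p, subdiff (gk P k p) xb (u p))
           (u_g : forall p, pert_g c p = - pert_up c p *: u p)
           (u'_sub : forall p, subdiff (hk P k p) xb (u' p))
           (u'_h : forall p, pert_h c p = pert_lo c p *: u' p).

Lemma multiplier_stationarity :
  \sum_p (- pert_up c p *: (u p - asel M k p y) - pert_lo c p *: (bsel M k p y - u' p))
    + (- pert_obj c * lam M) *: (xb - y) = 0.
Proof.
apply: (@eq0_of_dotv_quadratic_ge0 _ _ _ (- pert_obj c * lam M / 2)).
  by rewrite divr_ge0 // mulr_ge0 ?oppr_ge0 ?pert_obj_le0 // ltW.
move=> e; have := fdot_shift_perturbation_le e.
rewrite prox_term_shift [dotv (_ + _ *: _) e]dotvDl dotvZl dotv_suml.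
have -> : \sum_p dotv (pert_g c p) (- e) + \sum_p dotv (pert_h c p) (- e) +
    \sum_p pert_up c p * - dotv (asel M k p y) e + \sum_p pert_lo c p * dotv (bsel M k p y) e =
    - \sum_p dotv (- pert_up c p *: (u p - asel M k p y) - pert_lo c p *: (bsel M k p y - u' p)) e.
  rewrite -sumrN -!big_split /=; apply: eq_bigr => p _.
  rewrite u_g u'_h !dotvNr !dotvZl !dotvBl !dotvZl (dotvBl e (u p)) (dotvBl e (bsel M k p y)).
  by ring.
lra.
Qed.

(* A vanishing objective multiplier would leave only constraint multipliers, which
   Assumption 6 forces to vanish too. *)
Lemma pert_obj_lt0 : pert_obj c < 0.
Proof.
rewrite lt_neqAle pert_obj_le0 andbT; apply/eqP => obj0.
have up0 (p : 'I_m) : (p < m1)%N -> pert_up c p = 0.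
  move=> pm; have := pert_up_subgrad p pm (fup P M k p xb y + 1).
  rewrite obj0 mul0r addr0 opprD addNKr mulrN1; have := pert_up_le0 p; lra.
have lo0 (p : 'I_m) : pert_lo c p = 0.
  have [pm|pm] := ltnP p m1; last exact: pert_lo_constraint.
  have := pert_lo_subgrad p pm (flo P M k p xb y - 1).
  rewrite obj0 mul0r addr0 subKr mulr1; have := pert_lo_ge0 p; lra.
have con_sum0 : \sum_(p < m | (m1 <= p)%N) (- pert_up c p) *: (u p - asel M k p y) = 0.
  have := multiplier_stationarity; rewrite obj0 oppr0 mul0r scale0r addr0 => stat0.
  rewrite -[RHS]stat0 big_mkcond; apply: eq_bigr => p _; rewrite lo0 scale0r subr0.
  by case: ifP => // pm; rewrite up0 ?oppr0 ?scale0r // ltnNge pm.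
have con0 : forall p : 'I_m, (m1 <= p)%N -> - pert_up c p = 0.
  apply: (A6 k y xb xb_sol (fun p => - pert_up c p)) => [p pm|]; last first.
    by exists (fun p => u p - asel M k p y); split => // p _; exists (u p).
  split=> [|s /= s_le0]; first exact: fup_sol_le0.
  have := pert_up_compl p pm; have := pert_up_le0 p; have := fup_sol_le0 p pm; nra.
have := multipliers_nontrivial; rewrite obj0 addr0 big1 => [|p pm]; last first.
  by rewrite -[pert_up c p]opprK con0 ?oppr0.
by move=> ?; lra.
Qed.

Lemma kkt_of_multipliers :
  subproblem_kkt (fun p => pert_up c p / pert_obj c) (fun p => pert_lo c p / pert_obj c)
    (fun p => u p - asel M k p y) (fun p => bsel M k p y - u' p).
Proof.
have obj_lt0 := pert_obj_lt0; have obj_neq0 : pert_obj c != 0 by rewrite lt_eqF.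
split=> [p|p|||p pm].
- by exists (u p).
- by exists (u' p).
- apply: (@scalerI _ _ (- pert_obj c)); first by rewrite oppr_eq0.
  rewrite scaler0 -[RHS]multiplier_stationarity.
  rewrite scalerDr scalerA scaler_sumr; congr (_ + _).
  apply: eq_bigr => p _; rewrite scalerDr !scalerA -scaleNr.
  by congr (_ *: _ + _ *: _); field.
- move=> p pm; split=> s; apply: normalized_multiplier_ineq => //.
    exact: pert_up_subgrad.
  exact: pert_lo_subgrad.
- have up_le0 := pert_up_le0 p; have := pert_up_compl p pm; have := fup_sol_le0 p pm.
  move=> fup_le0 compl.
  have compl0 : pert_up c p * fup P M k p xb y = 0.
    by apply/eqP; rewrite eq_le compl mulr_le0.
  split.
  + by rewrite mulr_le0 // invr_le0 ltW.
  + by rewrite mulrAC compl0 mul0r.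
  + by rewrite pert_lo_constraint // mul0r.
Qed.

End Stationarity.

End Multipliers.

Lemma exists_subproblem_kkt : exists y1 y2 v1 v2, subproblem_kkt y1 y2 v1 v2.
Proof.
have [c c_le] := exists_multipliers.
have [u hu] := choice (pert_g_subgrad _ c_le).
have [u' hu'] := choice (pert_h_subgrad _ c_le).
do 4!eexists; exact: (kkt_of_multipliers _ c_le u u' (fun p => (hu p).1) (fun p => (hu p).2)
                                          (fun p => (hu' p).1) (fun p => (hu' p).2)).
Qed.

End SubproblemKKT.

Section ExtendedSubdifferential.
Context {R : realType}.

Lemma esubdiff_EFin (f : R -> R) (t a : R) :
  (forall s, f t + a * (s - t) <= f s) -> esubdiff (fun z => (f z)%:E) t a.
Proof. by move=> fa; split=> // s; rewrite -EFinD lee_fin. Qed.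

Lemma esubdiff_cst0 (t t' a : R) : esubdiff (fun=> 0%E) t a -> esubdiff (fun=> 0%E) t' a.
Proof.
move=> [_ ha]; split=> // s; have := ha (s - t' + t).
by rewrite addrK.
Qed.

Lemma nondecr_ind_nonpos : nondecr (@ind_nonpos R).
Proof.
move=> s t st; rewrite /ind_nonpos; case: (leP t 0) => [t0|_]; last by case: ifP; rewrite ?leey.
by rewrite (le_trans st t0).
Qed.

Lemma esubdiff_ind_nonpos (t a : R) :
  t <= 0 -> 0 <= a -> a * t = 0 -> esubdiff ind_nonpos t a.
Proof.
move=> t0 a0 at0; rewrite /esubdiff /ind_nonpos t0; split=> // s.
case: ifP => s0; last by rewrite leey.
by rewrite add0e lee_fin mulrBr at0 subr0 mulr_ge0_le0.
Qed.

End ExtendedSubdifferential.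

Section RealProblem.
Context {R : realType} {n m : nat} {P : cp1 R n m} {M : padc R n m}.
Local Notation vec := 'rV[R]_n.

Lemma cp1_real_decomposition : cp1_wf P ->
  exists U Dn : 'I_m -> R -> R,
  [/\ forall p : 'I_m, (p < m1 P)%N -> phiU P p = (fun z => (U p z)%:E),
      forall p : 'I_m, (p < m1 P)%N -> phiD P p = (fun z => (Dn p z)%:E) &
      forall p : 'I_m, (p < m1 P)%N -> convex_nondecr (U p) /\ convex_nonincr (Dn p)].
Proof.
move=> [_ [phi_real [_ [phi_decomp _]]]].
suff /choice[UD UD_spec] : forall p : 'I_m, exists UD : (R -> R) * (R -> R), (p < m1 P)%N ->
    [/\ phiU P p = (fun z => (UD.1 z)%:E), phiD P p = (fun z => (UD.2 z)%:E),
        convex_nondecr UD.1 & convex_nonincr UD.2].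
  exists (fun p => (UD p).1), (fun p => (UD p).2).
  by split=> p /UD_spec[].
move=> p; have [pm|_] := ltnP p (m1 P); last by exists (fun=> 0, fun=> 0).
have [psi [psi_convex phi_psi]] := phi_real p pm.
have := phi_decomp p; rewrite phi_psi => /(mono_decomp_real _ _ _ psi_convex).
by move=> [U [Dn [-> -> U_mono Dn_mono]]]; exists (U, Dn).
Qed.

Lemma subsol_kkt {k : nat} {y xb : vec} :
  cp1_wf P -> method_wf P M -> Assumption6 P M -> subsol P M k y xb ->
  exists (y1 y2 : 'I_m -> R) (v1 v2 : 'I_m -> vec),
  [/\ forall p, dup P M k p xb y (v1 p), forall p, dlo P M k p xb y (v2 p),
      \sum_p (y1 p *: v1 p + y2 p *: v2 p) + lam M *: (xb - y) = 0 &
      forall p, esubdiff (phiU P p) (fup P M k p xb y) (y1 p) /\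
                esubdiff (phiD P p) (flo P M k p xb y) (y2 p)].
Proof.
move=> wf [lam_gt0 [_ [_ [_ [_ [_ [_ [_ [_ [asel_sub bsel_sub]]]]]]]]]] A6 xb_sol.
have [U [Dn [eU eD UDn_mono]]] := cp1_real_decomposition wf.
have [_ [_ [phi_ind [phi_decomp gh_convex]]]] := wf.
have [y1 [y2 [v1 [v2 [dv1 dv2 stat subUD con]]]]] :=
  exists_subproblem_kkt P M k y xb U Dn (fun p => gh_convex k p) UDn_mono lam_gt0 xb_sol eU eD
    (asel_sub k) (bsel_sub k) A6.
exists y1, y2, v1, v2; split => // p; have [pm|pm] := ltnP p (m1 P).
  have [hU hD] := subUD p pm.
  by rewrite eU ?eD //; split; apply: esubdiff_EFin.
have [y1_ge0 compl y2_0] := con p pm.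
have [-> ->] := (phi_decomp p).1 (eq_ind_r _ nondecr_ind_nonpos (phi_ind p pm)).
rewrite phi_ind // y2_0; split; first exact: esubdiff_ind_nonpos (xb_sol.1 p pm) y1_ge0 compl.
by split=> // s; rewrite mul0r add0e.
Qed.

End RealProblem.

Section SeriesTail.
Context {R : realType}.
Implicit Types a : nat -> R.

Lemma tail_series a k : cvgn (series a) ->
  limn (fun N => \sum_(k <= j < N) a j) = limn (series a) - series a k.
Proof.
move=> a_cvg; apply: cvg_lim => //.
have : (fun N => series a N - series a k) @ \oo --> limn (series a) - series a k.
  by apply: cvgB => //; exact: cvg_cst.
apply: cvg_trans; apply: near_eq_cvg; near=> N.
have kN : (k <= N)%N by near: N; exact: nbhs_infty_ge.
by rewrite /series /= (big_cat_nat (leq0n k) kN) /= addrAC subrr add0r.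
Unshelve. all: end_near.
Qed.

Lemma tail_series_ge0 a k : cvgn (series a) -> (forall j, 0 <= a j) ->
  0 <= limn (fun N => \sum_(k <= j < N) a j).
Proof.
move=> a_cvg a_ge0; rewrite tail_series // subr_ge0.
apply: nondecreasing_cvgn_le => // i j ij; rewrite /series /= (big_cat_nat (leq0n i) ij) /=.
by rewrite lerDl sumr_ge0.
Qed.

Lemma tail_series_small a e : cvgn (series a) -> 0 < e ->
  \forall k \near \oo, limn (fun N => \sum_(k <= j < N) a j) < e.
Proof.
move=> a_cvg e_gt0; near=> k; rewrite tail_series //.
apply: le_lt_trans (ler_norm _) _; near: k; exact: (proj1 (cvgrPdist_lt _ _) a_cvg e e_gt0).
Unshelve. all: end_near.
Qed.

Lemma rcvg0_small (u : nat -> R) e : rcvg u 0 -> 0 < e -> \forall k \near \oo, u k < e.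
Proof.
move=> u_cvg e_gt0; have [K uK] := u_cvg e e_gt0; exists K => // k /uK.
by rewrite subr0; apply: le_lt_trans (ler_norm _).
Qed.

End SeriesTail.

Lemma eventually_small_parameters {R : realType} {n m : nat} {P : cp1 R n m} {M : padc R n m}
    (eta beta : R) :
  method_wf P M -> Assumption2 P M -> 0 < eta -> 0 < beta ->
  \forall k \near \oo, [/\ \big[Num.max/0]_(p < m) sigma M k p + eps M k <= beta,
                          del M k / (lam M + ell M k) <= beta & del M k <= eta].
Proof.
move=> [_ [_ [_ [eps_cvg [_ [_ [del_cvg [_ [step_cvg _]]]]]]]]] [_ [_ [ahat_cvg _]]].
move=> eta_gt0 beta_gt0.
have beta2_gt0 : 0 < beta / 2 by rewrite divr_gt0.
near=> k; split; last 2 first.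
- by apply: ltW; near: k; exact: rcvg0_small.
- by apply: ltW; near: k; exact: rcvg0_small.
have -> : beta = beta / 2 + beta / 2 by field.
apply: lerD; last by apply: ltW; near: k; exact: rcvg0_small.
have sigma_small : forall p, sigma M k p < beta / 2.
  by near: k; apply: filter_forall => p; exact: tail_series_small.
by apply: bigmax_le => [|p _]; apply: ltW.
Unshelve. all: end_near.
Qed.

Section WeakStationarity.
Context {R : realType} {n m : nat} {P : cp1 R n m} {M : padc R n m}.
Local Notation vec := 'rV[R]_n.

Lemma edist_le_enorm (x a : vec) (A : set vec) : A a -> (Defs.edist x A <= (enorm (x - a))%:E)%E.
Proof. by move=> Aa; apply: ereal_inf_lbound; exists a. Qed.

Lemma fk_sigma_le_fup k p (x y : vec) : subdiff (hk P k p) y (asel M k p y) ->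
  fk P k p x + sigma M k p <= fup P M k p x y.
Proof. by move=> a_sub; have := a_sub x; rewrite /fup /fk; lra. Qed.

Lemma flo_le_fk k p (x y : vec) : subdiff (gk P k p) y (bsel M k p y) ->
  flo P M k p x y <= fk P k p x.
Proof. by move=> b_sub; have := b_sub x; rewrite /flo /fk; lra. Qed.

Lemma dup_enlarged k p (xn xc : vec) (beta : R) v :
  subdiff (hk P k p) xc (asel M k p xc) -> 0 <= beta -> enorm (xc - xn) <= beta ->
  dup P M k p xn xc v ->
  setMinus (subdiff_enl beta (gk P k p) xn) (subdiff_enl beta (hk P k p) xn) v.
Proof.
move=> a_sub beta_ge0 close [w w_sub <-].
by exists w; [exists xn; rewrite subrr enorm0 | exists (asel M k p xc) => //; exists xc].
Qed.

Lemma dlo_enlarged k p (xn xc : vec) (beta : R) v :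
  subdiff (gk P k p) xc (bsel M k p xc) -> 0 <= beta -> enorm (xc - xn) <= beta ->
  dlo P M k p xn xc v ->
  setMinus (subdiff_enl beta (gk P k p) xn) (subdiff_enl beta (hk P k p) xn) v.
Proof.
move=> b_sub beta_ge0 close [w w_sub <-].
by exists (bsel M k p xc); [exists xc | exists w => //; exists xn; rewrite subrr enorm0].
Qed.

Lemma weakly_A_stationary_le {eta1 eta2 : \bar R} {beta : R} {kbar : nat} {x : vec} :
  (eta1 <= eta2)%E -> weakly_A_stationary P eta1 beta kbar x ->
  weakly_A_stationary P eta2 beta kbar x.
Proof. by move=> eta12 [k [kbar_k dist_le]]; exists k; split=> //; apply: le_trans eta12. Qed.

Lemma kkt_term_in_wA_set k p (xn xc : vec) (beta : R) y1 y2 v1 v2 :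
  cp1_wf P -> method_wf P M -> 0 <= sigma M k p -> sigma M k p + eps M k <= beta ->
  enorm (xc - xn) <= beta ->
  fup P M k p xn xc <= fk P k p xn + sigma M k p + eps M k ->
  (I2 P p -> fk P k p xn - eps M k <= flo P M k p xn xc) ->
  dup P M k p xn xc v1 -> dlo P M k p xn xc v2 ->
  esubdiff (phiU P p) (fup P M k p xn xc) y1 -> esubdiff (phiD P p) (flo P M k p xn xc) y2 ->
  wA_set P beta k p xn (y1 *: v1 + y2 *: v2).
Proof.
move=> wf mwf sigma_ge0 sig_eps close up_close lo_close dv1 dv2 sub1 sub2.
have [_ [eps_gt0 [_ [_ [_ [_ [_ [_ [_ [asel_sub bsel_sub]]]]]]]]]] := mwf.
have beta_ge0 : 0 <= beta.
  by apply: le_trans sig_eps; exact: addr_ge0 sigma_ge0 (ltW (eps_gt0 k)).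
exists y1, y2, v1, v2; split; last split; last split.
- exists (fup P M k p xn xc); split=> //.
  have := fk_sigma_le_fup k p xn xc (asel_sub k p xc).
  by rewrite ler_norml; lra.
- have [I2p|not_I2p] := pselect (I2 P p).
    exists (flo P M k p xn xc); split=> //.
    have := flo_le_fk k p xn xc (bsel_sub k p xc); have := lo_close I2p.
    by rewrite ler_norml; lra.
  have phi_nd : nondecr (phi P p) by apply/not_notP.
  have [_ phiD0] := (wf.2.2.2.1 p).1 phi_nd.
  exists (fk P k p xn); split; first by rewrite subrr normr0.
  by move: sub2; rewrite phiD0; exact: esubdiff_cst0.
- exact: dup_enlarged (asel_sub k p xc) beta_ge0 close dv1.
- by split=> //; exact: dlo_enlarged (bsel_sub k p xc) beta_ge0 close dv2.
Qed.

Lemma weakly_A_stationary_stopped {k kbar : nat} {eta beta : R} :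
  cp1_wf P -> method_wf P M -> Assumption2 P M -> Assumption3 P M -> Assumption6 P M ->
  generated P M -> (kbar <= k)%N ->
  \big[Num.max/0]_(p < m) sigma M k p + eps M k <= beta ->
  del M k / (lam M + ell M k) <= beta -> del M k <= eta ->
  weakly_A_stationary P eta%:E beta kbar (xx M k (ik M k).+1).
Proof.
move=> wf mwf [ahat_ge0 [_ [ahat_cvg _]]] [ell_gt0 _] A6 [_ [_ [sol [stop _]]]] kbar_k.
move=> sig_eps_le step_le_beta del_le_eta.
have [lam_gt0 [_ [_ [_ [del_gt0 _]]]]] := mwf.
have [[up_close [lo_close step_le]] _] := stop k.
move: (ik M k) up_close lo_close step_le (sol k (ik M k)) => i up_close lo_close step_le sol_i.
set xc := xx M k i in up_close lo_close step_le sol_i *.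
set xn := xx M k i.+1 in up_close lo_close step_le sol_i *.
have [y1 [y2 [v1 [v2 [dv1 dv2 stat subd]]]]] := subsol_kkt wf mwf A6 sol_i.
have kkt_mem : Defs.msum (fun p => wA_set P beta k p xn) (\sum_p (y1 p *: v1 p + y2 p *: v2 p)).
  exists (fun p => y1 p *: v1 p + y2 p *: v2 p); split => // p.
  apply: kkt_term_in_wA_set (up_close p) (lo_close p) (dv1 p) (dv2 p) (subd p).1 (subd p).2 => //.
  - exact: tail_series_ge0.
  - by apply: le_trans sig_eps_le; rewrite lerD2r; exact: le_bigmax.
  - by rewrite -opprB enormN (le_trans step_le).
exists k; split => //; apply: le_trans (edist_le_enorm 0 _ _ kkt_mem) _.
have -> : \sum_p (y1 p *: v1 p + y2 p *: v2 p) = - (lam M *: (xn - xc)).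
  by apply/eqP; rewrite -addr_eq0 stat.
rewrite sub0r opprK enormZ (ger0_norm (ltW lam_gt0)) lee_fin.
apply: le_trans del_le_eta; apply: le_trans (ler_wpM2l (ltW lam_gt0) step_le) _.
have lam_ell_gt0 : 0 < lam M + ell M k by rewrite addr_gt0.
by rewrite mulrCA ger_pMr ?del_gt0 // ler_pdivrMr // mul1r lerDl ltW.
Qed.

End WeakStationarity.

Theorem proposition4p8 (R : realType) (n m : nat) (P : cp1 R n m) (M : padc R n m) :
  cp1_wf P ->
  Assumption1 P -> Assumption2 P M -> Assumption3 P M -> Assumption4 P ->
  Assumption5 P -> method_wf P M -> Assumption6 P M ->
  generated P M ->
  (exists B : R, forall k, enorm (xs M k) <= B) ->
  (forall x, domF_all P x -> forall p, I2 P p -> dAinf P p x = [set 0]) ->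
  forall (eta beta : R) (kbar : nat), 0 < eta -> 0 < beta ->
  exists k0 : nat, (kbar <= k0)%N /\
    \big[Num.max/0]_(p < m) sigma M k0 p + eps M k0 <= beta /\
    del M k0 / (lam M + ell M k0) <= beta /\
    del M k0 <= eta /\
    weakly_A_stationary P
      (eta%:E * maxe 1%E ((Num.sqrt (2 * m)%:R)%:E * Dconst P M))%E
      beta kbar (xx M k0 (ik M k0).+1).
Proof.
move=> wf _ A2 A3 _ _ mwf A6 gen _ _ eta beta kbar eta_gt0 beta_gt0.
have [K _ small] := eventually_small_parameters eta beta mwf A2 eta_gt0 beta_gt0.
have kbar_k0 := leq_maxl kbar K.
have [sig_eps step_le del_le] := small (maxn kbar K) (leq_maxr kbar K).
exists (maxn kbar K); do 4!split => //.
apply: weakly_A_stationary_le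
  (weakly_A_stationary_stopped wf mwf A2 A3 A6 gen kbar_k0 sig_eps step_le del_le).
rewrite -[X in (X <= _)%E]mule1; apply: lee_wpmul2l; first by rewrite lee_fin ltW.
by rewrite le_max lexx.
Qed.
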